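(* Let $H\in\mathbb{R}^{n\times n}$ and $M\in\mathbb{R}^{m\times m}$ be symmetric positive semidefinite and $A\in\mathbb{R}^{m\times n}$. Let $l$ be an index and $\mathcal{B},\mathcal{N}$ index sets such that $\mathcal{B}$, $\{l\}$, $\mathcal{N}$ are pairwise disjoint with union $\{1,\dots,n\}$. Consider vectors $(\Delta x,\Delta y,\Delta z)\in\mathbb{R}^n\times\mathbb{R}^m\times\mathbb{R}^n$ satisfying \[ H\Delta x-A^T\Delta y-\Delta z=0,\quad A\Delta x+M\Delta y=0,\quad \Delta x_{\mathcal{N}}=0,\quad \Delta z_{\mathcal{B}}=0. \tag{$*$} \] Assume $K_{\mathcal{B}}$ is nonsingular and let $\Delta x_l$ be a given nonnegative scalar. 1. If $\Delta x_l=0$, then the only solution of $( * )$ with this value of $\Delta x_l$ is zero, i.e., $\Delta x_{\mathcal{B}}=0$, $\Delta y=0$, $\Delta z_l=0$, $\Delta z_{\mathcal{N}}=0$. 2. If $\Delta x_l>0$, then the quantities $\Delta x_{\mathcal{B}},\Delta y,\Delta z_l,\Delta z_{\mathcal{N}}$ of a solution of $( * )$ with this value of $\Delta x_l$ are unique and satisfy \[ K_{\mathcal{B}}\begin{pmatrix}\Delta x_{\mathcal{B}}\\ -\Delta y\end{pmatrix}=-\begin{pmatrix}h_{\mathcal{B}l}\\ a_l\end{pmatrix}\Delta x_l,\quad \Delta z_l=h_{ll}\Delta x_l+h_{\mathcal{B}l}^T\Delta x_{\mathcal{B}}-a_l^T\Delta y,\quad \Delta z_{\mathcal{N}}=h_{\mathcal{N}l}\Delta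 x_l+H_{\mathcal{B}\mathcal{N}}^T\Delta x_{\mathcal{B}}-A_{\mathcal{N}}^T\Delta y. \] Moreover, either (i) $K_l$ is nonsingular and $\Delta z_l>0$, or (ii) $K_l$ is singular and $\Delta z_l=0$, in which case $\Delta y=0$, $\Delta z_{\mathcal{N}}=0$, and the zero eigenvalue of $K_l$ has multiplicity one with corresponding eigenvector $(\Delta x_l,\Delta x_{\mathcal{B}},0)$.
   Context: For index sets $S,T$: $w_S$ is the subvector of $w$ indexed by $S$; $H_{ST}$ is the submatrix of $H$ with rows in $S$ and columns in $T$; $A_S$ is the matrix of columns of $A$ indexed by $S$; $a_l$ is the $l$th column of $A$; $h_{ll}$ is the $l$th diagonal entry of $H$; $h_{Sl}$ is the column vector of entries $h_{il}$, $i\in S$. Define \[ K_{\mathcal{B}}=\begin{pmatrix}H_{\mathcal{B}\mathcal{B}}&A_{\mathcal{B}}^T\\ A_{\mathcal{B}}&-M\end{pmatrix},\qquad K_l=\begin{pmatrix}h_{ll}&h_{\mathcal{B}l}^T&a_l^T\\ h_{\mathcal{B}l}&H_{\mathcal{B}\mathcal{B}}&A_{\mathcal{B}}^T\\ a_l&A_{\mathcal{B}}&-M\end{pmatrix}. \] *)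

From HB Require Import structures.
From mathcomp Require Import all_boot all_order all_algebra.
Set Implicit Arguments. Unset Strict Implicit. Unset Printing Implicit Defensive.
Import Order.TTheory GRing.Theory Num.Theory.
Local Open Scope ring_scope.

Section Defs.
Variable R : realFieldType.

(* The k-th element (in increasing order) of an index set S of {0..n-1}. *)
Definition sidx n (S : {set 'I_n}) (k : 'I_#|S|) : 'I_n := enum_val k.

Definition sym_psd n (H : 'M[R]_n) : Prop :=
  H^T = H /\ forall x : 'cV[R]_n, 0 <= (x^T *m H *m x) 0 0.

Definition subv n (S : {set 'I_n}) (w : 'cV[R]_n) : 'cV[R]_#|S| :=
  \col_k w (sidx k) 0.
Definition subm n (S T : {set 'I_n}) (H : 'M[R]_n) : 'M[R]_(#|S|, #|T|) :=
  \matrix_(i, j) H (sidx i) (sidx j).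
Definition subcol n (S : {set 'I_n}) (H : 'M[R]_n) (l : 'I_n) : 'cV[R]_#|S| :=
  \col_k H (sidx k) l.
Definition colsubm m n (A : 'M[R]_(m, n)) (S : {set 'I_n}) : 'M[R]_(m, #|S|) :=
  \matrix_(i, j) A i (sidx j).

Definition KB m n (H : 'M[R]_n) (M : 'M[R]_m) (A : 'M[R]_(m, n))
    (B : {set 'I_n}) : 'M[R]_(#|B| + m) :=
  block_mx (subm B B H) (colsubm A B)^T (colsubm A B) (- M).

(* K_l, in block form with index order (l, B, rows of A) *)
Definition Kl m n (H : 'M[R]_n) (M : 'M[R]_m) (A : 'M[R]_(m, n))
    (B : {set 'I_n}) (l : 'I_n) : 'M[R]_(1 + (#|B| + m)) :=
  block_mx (H l l)%:M (row_mx (subcol B H l)^T (col l A)^T)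
           (col_mx (subcol B H l) (col l A)) (KB H M A B).

Definition sys m n (H : 'M[R]_n) (M : 'M[R]_m) (A : 'M[R]_(m, n))
    (B N : {set 'I_n}) (dx : 'cV[R]_n) (dy : 'cV[R]_m) (dz : 'cV[R]_n) : Prop :=
  [/\ H *m dx - A^T *m dy - dz = 0,
      A *m dx + M *m dy = 0,
      subv N dx = 0 &
      subv B dz = 0].

End Defs.

From HB Require Import structures.
From mathcomp Require Import all_boot all_order all_algebra.
From mathcomp Require Import ring lra.
Import Order.TTheory GRing.Theory Num.Theory.
Local Open Scope ring_scope.
Set Implicit Arguments. Unset Strict Implicit. Unset Printing Implicit Defensive.

(* Eliminating [dz] via [dz_B = 0] shows that [(dx_B, -dy)] solves a system with matrix
   [K_B] and right-hand side proportional to [dx_l]; nonsingularity of [K_B] gives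
   uniqueness and the formulas. Pairing the two equations of ( * ) with [(dx, dy)] yields
   [dx_l dz_l = dx^T H dx + dy^T M dy >= 0]. If [dz_l = 0], both semidefinite forms vanish,
   so [H dx = 0] and [M dy = 0]; then [dz_B = 0] forces [A_B^T dy = 0], i.e.
   [K_B (0, -dy) = 0], and [dy = 0]. Finally, multiplying [K_l] on the right by a shear
   built from the solution makes it block upper triangular with diagonal blocks [dz_l] and
   [K_B], so [det K_l * dx_l = dz_l * det K_B]. *)

Section MatrixFacts.
Variable R : realFieldType.

Lemma addmxE p q (X Y : 'M[R]_(p, q)) i j : (X + Y) i j = X i j + Y i j.
Proof. by rewrite mxE. Qed.

Lemma oppmxE p q (X : 'M[R]_(p, q)) i j : (- X) i j = - X i j.
Proof. by rewrite mxE. Qed.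

Lemma scalemxE p q a (X : 'M[R]_(p, q)) i j : (a *: X) i j = a * X i j.
Proof. by rewrite mxE. Qed.

Lemma dot_self_ge0 p (u : 'cV[R]_p) : 0 <= (u^T *m u) 0 0.
Proof. by rewrite mxE; apply: sumr_ge0 => i _; rewrite mxE -expr2 sqr_ge0. Qed.

Lemma dot_self_eq0 p (u : 'cV[R]_p) : (u^T *m u) 0 0 = 0 -> u = 0.
Proof.
have sq_ge0 (k : 'I_p) : true -> 0 <= u^T 0 k * u k 0 by rewrite mxE -expr2 sqr_ge0.
rewrite mxE => /(psumr_eq0P sq_ge0) u0; apply/matrixP => i j.
by have /eqP := u0 i isT; rewrite (ord1 j) !mxE -expr2 sqrf_eq0 => /eqP.
Qed.

(* If [w = X x], then [t |-> q (x + t w) = 2 t |w|^2 + t^2 q(w)] stays nonnegative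
   only if [|w|^2 = 0]. *)
Lemma psd_quad_eq0 p (X : 'M[R]_p) (x : 'cV[R]_p) :
  sym_psd X -> (x^T *m X *m x) 0 0 = 0 -> X *m x = 0.
Proof.
case=> XS Xpsd qx0; set w := X *m x.
have xX : x^T *m X = w^T by rewrite /w trmx_mul XS.
have wx : (w^T *m x) 0 0 = 0 by rewrite -xX.
set a := (w^T *m w) 0 0; set b := (w^T *m X *m w) 0 0.
have b_ge0 : 0 <= b by exact: Xpsd.
have a_ge0 : 0 <= a by exact: dot_self_ge0.
have quad t : ((x + t *: w)^T *m X *m (x + t *: w)) 0 0 = 2 * t * a + t ^+ 2 * b.
  rewrite linearD linearZ /= [(x + t *: w)^T]linearD /= !linearZ /= !mulmxDl.
  rewrite -!scalemxAl xX !(addmxE, scalemxE).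
  rewrite -/b -mulmxA -/w -/a wx; ring.
have : a = 0.
  set t := - a / (b + 1).
  have ht : t * (b + 1) = - a by rewrite /t divfK // gt_eqF //; lra.
  have := Xpsd (x + t *: w); rewrite quad; nra.
exact: dot_self_eq0.
Qed.

Lemma unitmx_1_add_outer p (u : 'cV[R]_p) (s : R) : 0 <= s ->
  1%:M + s *: (u *m u^T) \in unitmx.
Proof.
move=> s_ge0; have := mulr_ge0 s_ge0 (dot_self_ge0 u).
set q := (u^T *m u) 0 0 => sq_ge0; have sq_gt0 : 0 < 1 + s * q by lra.
have outer2 : (u *m u^T) *m (u *m u^T) = q *: (u *m u^T).
  by rewrite mulmxA -(mulmxA u) (mx11_scalar (u^T *m u)) mul_mx_scalar -scalemxAl.
pose t := s / (1 + s * q).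
have ht : s - t - s * t * q = 0 by rewrite /t; field; rewrite gt_eqF.
suff inv : (1%:M + s *: (u *m u^T)) *m (1%:M - t *: (u *m u^T)) = 1%:M.
  by case: (mulmx1_unit inv).
rewrite mulmxDl mul1mx mulmxBr mulmx1 -scalemxAl -scalemxAr outer2 scalerA.
apply/matrixP => i j; rewrite !(addmxE, oppmxE, scalemxE).
rewrite -[RHS]addr0 -(mulr0 ((u *m u^T) i j)) -ht; ring.
Qed.

Lemma char_poly_simmx p (X Y P : 'M[R]_p) :
  \det P != 0 -> X *m P = P *m Y -> char_poly X = char_poly Y.
Proof.
move=> detP XP; have dP : (\det P)%:P != 0 :> {poly R} by rewrite polyC_eq0.
have : char_poly_mx X *m map_mx polyC P = map_mx polyC P *m char_poly_mx Y.
  by rewrite /char_poly_mx mulmxBl mulmxBr -!map_mxM XP scalar_mxC.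
move/(congr1 determinant); rewrite !det_mulmx det_map_mx => e.
by apply: (mulIf dP); rewrite /char_poly e mulrC.
Qed.

End MatrixFacts.

Section Submatrices.
Variables (R : realFieldType) (n : nat).
Implicit Types (S T : {set 'I_n}) (u v w : 'cV[R]_n) (X : 'M[R]_n).

Lemma subvD S u v : subv S (u + v) = subv S u + subv S v.
Proof. by apply/matrixP => i j; rewrite !mxE. Qed.

Lemma subvN S v : subv S (- v) = - subv S v.
Proof. by apply/matrixP => i j; rewrite !mxE. Qed.

Lemma subvZ S a v : subv S (a *: v) = a *: subv S v.
Proof. by apply/matrixP => i j; rewrite !mxE. Qed.

Lemma subv_zero S : subv S (0 : 'cV[R]_n) = 0.
Proof. by apply/matrixP => i j; rewrite !mxE. Qed.

Lemma subv_eq0 S w : subv S w = 0 -> {in S, forall i, w i 0 = 0}.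
Proof.
move=> /matrixP w0 i iS; have := w0 (enum_rank_in iS i) 0.
by rewrite !mxE /sidx enum_rankK_in.
Qed.

Lemma subcolE S X l : subcol S X l = subv S (col l X).
Proof. by apply/matrixP => i j; rewrite !mxE. Qed.

Lemma trmx_subm S T X : (subm S T X)^T = subm T S X^T.
Proof. by apply/matrixP => i j; rewrite !mxE. Qed.

Lemma colsubm_trmx S w : colsubm w^T S = (subv S w)^T.
Proof. by apply/matrixP => i j; rewrite (ord1 i) !mxE. Qed.

Lemma subm_mulmx S T X (v : 'cV[R]_#|T|) : subm S T X *m v = subv S (colsubm X T *m v).
Proof.
by apply/matrixP => i j; rewrite (ord1 j) !mxE; apply: eq_bigr => k _; rewrite !mxE.
Qed.

Lemma trmx_colsubm_mulmx m S (G : 'M[R]_(m, n)) (y : 'cV[R]_m) :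
  (colsubm G S)^T *m y = subv S (G^T *m y).
Proof.
by apply/matrixP => i j; rewrite (ord1 j) !mxE; apply: eq_bigr => k _; rewrite !mxE.
Qed.

Lemma trmx_subcol_mulmx S X l (v : 'cV[R]_#|S|) :
  ((subcol S X l)^T *m v) 0 0 = (colsubm X^T S *m v) l 0.
Proof. by rewrite !mxE; apply: eq_bigr => k _; rewrite !mxE. Qed.

Lemma trmx_col_mulmx m (G : 'M[R]_(m, n)) l (y : 'cV[R]_m) :
  ((col l G)^T *m y) 0 0 = (G^T *m y) l 0.
Proof. by rewrite !mxE; apply: eq_bigr => k _; rewrite !mxE. Qed.

End Submatrices.

Section Partition.
Variables (R : realFieldType) (n : nat) (l : 'I_n) (B N : {set 'I_n}).
Hypotheses (lB : l \notin B) (lN : l \notin N) (dBN : [disjoint B & N])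
  (cover : B :|: [set l] :|: N = setT).

Lemma sum_partition (F : 'I_n -> R) : {in N, forall i, F i = 0} ->
  \sum_j F j = F l + \sum_(k < #|B|) F (sidx k).
Proof.
move=> F0; have -> : \sum_(k < #|B|) F (sidx k) = \sum_(j in B) F j.
  by rewrite [RHS]big_enum_val.
rewrite (bigID [in N]) /= big1 ?add0r; last by move=> i /F0.
rewrite (bigD1 l) //=; congr (_ + _); apply: eq_bigl => j.
case jB: (j \in B).
  by rewrite (disjointFr dBN jB); apply: contraNneq lB => <-.
have : j \in B :|: [set l] :|: N by rewrite cover inE.
by rewrite !inE jB /= => /orP[->|->]; rewrite ?andbF.
Qed.

Lemma mulmx_partition p (G : 'M[R]_(p, n)) (w : 'cV[R]_n) : subv N w = 0 ->
  G *m w = w l 0 *: col l G + colsubm G B *m subv B w.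
Proof.
move=> wN; apply/matrixP => i j; rewrite (ord1 j) !mxE.
rewrite (sum_partition (F := fun j => G i j * w j 0)); last first.
  by move=> k kN; rewrite (subv_eq0 wN kN) mulr0.
by rewrite mulrC; congr (_ + _); apply: eq_bigr => k _; rewrite !mxE.
Qed.

Lemma dot_partition (u v : 'cV[R]_n) : subv N u = 0 -> subv B v = 0 ->
  (v^T *m u) 0 0 = u l 0 * v l 0.
Proof.
move=> uN vB; rewrite (mulmx_partition v^T uN) colsubm_trmx vB trmx0 mul0mx addr0.
by rewrite !mxE.
Qed.

End Partition.

Definition shear_mx (R : comPzRingType) p (x : R) (u : 'cV[R]_p) : 'M[R]_(1 + p) :=
  block_mx x%:M 0 u 1%:M.

Lemma det_shear_mx (R : comPzRingType) p (x : R) (u : 'cV[R]_p) : \det (shear_mx x u) = x.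
Proof. by rewrite det_lblock det_scalar1 det1 mulr1. Qed.

Section System.
Variables (R : realFieldType) (n m : nat).
Variables (H : 'M[R]_n) (M : 'M[R]_m) (A : 'M[R]_(m, n)) (l : 'I_n) (B N : {set 'I_n}).
Hypotheses (lB : l \notin B) (lN : l \notin N) (dBN : [disjoint B & N])
  (cover : B :|: [set l] :|: N = setT).
Hypotheses (HS : H^T = H) (MS : M^T = M).

Lemma sys0 : sys H M A B N 0 0 0.
Proof. by split; rewrite ?mulmx0 ?subr0 ?addr0 // subv_zero. Qed.

Lemma sysE dx dy dz : sys H M A B N dx dy dz ->
  [/\ dz = H *m dx - A^T *m dy, A *m dx = - (M *m dy), subv N dx = 0 & subv B dz = 0].
Proof.
case=> dzE Adx dxN dzB; split=> //; first by rewrite (subr0_eq dzE).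
by apply/eqP; rewrite -addr_eq0; apply/eqP.
Qed.

Lemma KB_mul_sys dx dy dz : sys H M A B N dx dy dz ->
  KB H M A B *m col_mx (subv B dx) (- dy) = - (dx l 0 *: col_mx (subcol B H l) (col l A)).
Proof.
move=> /sysE [dzE Adx dxN dzB].
rewrite (mulmx_partition lB lN dBN cover H dxN) in dzE.
rewrite (mulmx_partition lB lN dBN cover A dxN) in Adx.
rewrite /KB mul_block_col scale_col_mx opp_col_mx; congr col_mx.
  apply: (addrI (dx l 0 *: subcol B H l)); rewrite addrN -dzB dzE.
  by rewrite subm_mulmx mulmxN trmx_colsubm_mulmx !subvD subvN subvZ subcolE addrA.
apply: (addrI (dx l 0 *: col l A)).
by rewrite mulNmx mulmxN opprK addrA Adx addNr addrN.
Qed.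

Lemma sys_dz_l dx dy dz : sys H M A B N dx dy dz ->
  dz l 0 = H l l * dx l 0 + ((subcol B H l)^T *m subv B dx) 0 0
           - ((col l A)^T *m dy) 0 0.
Proof.
move=> /sysE [dzE _ dxN _].
rewrite trmx_subcol_mulmx trmx_col_mulmx HS dzE (mulmx_partition lB lN dBN cover _ dxN).
by rewrite !(addmxE, oppmxE, scalemxE) [col l H l 0]mxE mulrC.
Qed.

Lemma sys_dz_N dx dy dz : sys H M A B N dx dy dz ->
  subv N dz = dx l 0 *: subcol N H l + (subm B N H)^T *m subv B dx
              - (colsubm A N)^T *m dy.
Proof.
move=> /sysE [dzE _ dxN _].
rewrite dzE (mulmx_partition lB lN dBN cover _ dxN) !subvD subvN subvZ.
by rewrite trmx_subm HS subm_mulmx trmx_colsubm_mulmx subcolE.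
Qed.

(* Complementarity: only the pair [(dx_l, dz_l)] escapes [dx_N = 0] and [dz_B = 0]. *)
Lemma sys_dot dx dy dz : sys H M A B N dx dy dz ->
  dx l 0 * dz l 0 = (dx^T *m H *m dx) 0 0 + (dy^T *m M *m dy) 0 0.
Proof.
move=> /sysE [dzE Adx dxN dzB].
rewrite -(dot_partition lB lN dBN cover dxN dzB) dzE linearB /= !trmx_mul trmxK HS mulmxBl.
by rewrite -[dy^T *m A *m dx]mulmxA Adx mulmxN opprK mulmxA addmxE.
Qed.

Lemma Kl_mul_shear dx dy dz : sys H M A B N dx dy dz ->
  Kl H M A B l *m shear_mx (dx l 0) (col_mx (subv B dx) (- dy))
  = block_mx (dz l 0)%:M (col_mx (subcol B H l) (col l A))^T 0 (KB H M A B).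
Proof.
move=> S; rewrite /Kl /shear_mx mulmx_block -tr_col_mx (KB_mul_sys S).
rewrite !mulmx0 !add0r !mulmx1 [col_mx _ _ *m _]mul_mx_scalar addrN; congr block_mx.
apply/matrixP => i j; rewrite (ord1 i) (ord1 j) addmxE -scalar_mxM (sys_dz_l S).
by rewrite tr_col_mx mul_row_col mulmxN addmxE oppmxE !mxE !mulr1n addrA.
Qed.

Lemma det_Kl_sys dx dy dz : sys H M A B N dx dy dz ->
  \det (Kl H M A B l) * dx l 0 = dz l 0 * \det (KB H M A B).
Proof.
move=> S; have := congr1 determinant (Kl_mul_shear S).
by rewrite det_mulmx det_shear_mx det_ublock det_scalar1.
Qed.

Lemma KB_sym : (KB H M A B)^T = KB H M A B.
Proof.
rewrite /KB tr_block_mx trmxK linearN /= MS; congr block_mx.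
by rewrite trmx_subm HS.
Qed.

Hypothesis KB_unit : KB H M A B \in unitmx.

Lemma sys_unique dx dy dz dx' dy' dz' :
  sys H M A B N dx dy dz -> sys H M A B N dx' dy' dz' -> dx' l 0 = dx l 0 ->
  [/\ dx' = dx, dy' = dy & dz' = dz].
Proof.
move=> S S' dxl'.
have := KB_mul_sys S'; rewrite dxl' -(KB_mul_sys S).
move/(canLR (mulKmx KB_unit)); rewrite mulKmx // => /eq_col_mx [dxB' /oppr_inj dy'E].
move: S S' => /sysE [dzE _ dxN _] /sysE [dzE' _ dxN' _].
have dx'E : dx' = dx.
  by rewrite -[dx]mul1mx -[dx']mul1mx !(mulmx_partition lB lN dBN cover) // dxl' dxB'.
by split=> //; rewrite dzE dzE' dx'E dy'E.
Qed.

Lemma Kl_unitE dx dy dz : sys H M A B N dx dy dz -> dx l 0 != 0 ->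
  (Kl H M A B l \in unitmx) = (dz l 0 != 0).
Proof.
move=> S dxl0; have detE := det_Kl_sys S.
have KBdet : \det (KB H M A B) != 0 by rewrite -unitfE -unitmxE.
rewrite unitmxE unitfE; apply/idP/idP => [detKl | dzl0].
  by apply: contraNneq (mulf_neq0 detKl dxl0) => dzl; rewrite detE dzl mul0r.
by apply: contraNneq (mulf_neq0 dzl0 KBdet) => detKl; rewrite -detE detKl mul0r.
Qed.

Hypotheses (HP : sym_psd H) (MP : sym_psd M).

Lemma sys_dxz_l_ge0 dx dy dz : sys H M A B N dx dy dz -> 0 <= dx l 0 * dz l 0.
Proof.
by move=> S; rewrite (sys_dot S) addr_ge0 //; [apply: HP.2 | apply: MP.2].
Qed.

Lemma sys_dz_l_eq0 dx dy dz : sys H M A B N dx dy dz -> dz l 0 = 0 ->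
  dy = 0 /\ dz = 0.
Proof.
move=> S dzl0; have := sys_dot S; rewrite dzl0 mulr0 => quad0.
have := HP.2 dx; have := MP.2 dy => qM qH.
have /(psd_quad_eq0 HP) Hdx0 : (dx^T *m H *m dx) 0 0 = 0 by lra.
have /(psd_quad_eq0 MP) Mdy0 : (dy^T *m M *m dy) 0 0 = 0 by lra.
move: S => /sysE [dzE _ _ dzB]; rewrite Hdx0 sub0r in dzE.
have ATdy0 : (colsubm A B)^T *m dy = 0.
  by rewrite trmx_colsubm_mulmx -[A^T *m dy]opprK -dzE subvN dzB oppr0.
have : KB H M A B *m col_mx 0 (- dy) = 0.
  by rewrite /KB mul_block_col !mulmx0 !add0r !mulmxN ATdy0 mulNmx Mdy0 !oppr0 col_mx0.
move/(canRL (mulKmx KB_unit)); rewrite mulmx0 -col_mx0 => /eq_col_mx [_ /eqP].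
by rewrite oppr_eq0 => /eqP dy0; rewrite dzE dy0 mulmx0 oppr0.
Qed.

(* Conjugating by the shear gives [[0, *], [0, K']] with [K' = (1 + u u^T / x_l^2) K_B]
   invertible, so the eigenvalue [0] of [K_l] is simple. *)
Lemma mup0_char_poly_Kl dx dy dz : sys H M A B N dx dy dz -> dx l 0 != 0 ->
  dz l 0 = 0 -> mup 0 (char_poly (Kl H M A B l)) = 1%N.
Proof.
move=> S dxl0 dzl0; move: (Kl_mul_shear S) (KB_mul_sys S); rewrite dzl0 raddf0.
set xl := dx l 0; set u := col_mx _ _; set c := col_mx _ _ => KlP KBu.
have cE : c^T = - (xl^-1 *: (u^T *m KB H M A B)).
  have -> : c = - (xl^-1 *: (KB H M A B *m u)).
    by rewrite KBu scalerN opprK scalerA mulVf // scale1r.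
  by rewrite linearN linearZ /= trmx_mul KB_sym.
pose K' := KB H M A B - xl^-1 *: (u *m c^T).
pose T : 'M[R]_(1 + (#|B| + m)) := block_mx 0 (xl^-1 *: c^T) 0 K'.
have shearT : shear_mx xl u *m T = block_mx 0 c^T 0 (KB H M A B).
  rewrite /shear_mx /T mulmx_block !mulmx0 !mul0mx !addr0 ?add0r mul1mx mul_scalar_mx.
  by rewrite scalerA mulfV // scale1r -scalemxAr addrC /K' subrK.
have K'E : K' = (1%:M + (xl^-1 * xl^-1) *: (u *m u^T)) *m KB H M A B.
  by rewrite mulmxDl mul1mx -scalemxAl /K' cE mulmxN -scalemxAr scalerN scalerA opprK mulmxA.
have K'_unit : K' \in unitmx.
  by rewrite K'E unitmx_mul KB_unit andbT unitmx_1_add_outer // -expr2 sqr_ge0.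
have -> : char_poly (Kl H M A B l) = char_poly T.
  by apply: (char_poly_simmx (P := shear_mx xl u)); rewrite ?det_shear_mx // KlP shearT.
have -> : char_poly T = 'X * char_poly K'.
  rewrite /char_poly /char_poly_mx /T map_block_mx !map_mx0 (scalar_mx_block 1 (#|B| + m)).
  by rewrite opp_block_mx add_block_mx !oppr0 !addr0 det_ublock det_scalar1.
rewrite mupMl; last first.
  rewrite /root horner_coef0 char_poly_det mulf_eq0 negb_or signr_eq0 /=.
  by rewrite -unitfE -unitmxE.
by rewrite -[X in mup _ X](subr0 'X) -polyC0 -[_ - _]expr1 mup_XsubCX eqxx.
Qed.

Lemma Kl_kernel dx dy dz : sys H M A B N dx dy dz -> dx l 0 != 0 -> dz l 0 = 0 ->
  let v := col_mx (dx l 0)%:M (col_mx (subv B dx) (0 : 'cV[R]_m)) in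
  v != 0 /\ Kl H M A B l *m v = 0.
Proof.
move=> S dxl0 dzl0 v; have [dy0 _] := sys_dz_l_eq0 S dzl0.
have KlP := Kl_mul_shear S; rewrite dzl0 raddf0 dy0 oppr0 in KlP.
have vE : v = shear_mx (dx l 0) (col_mx (subv B dx) 0) *m col_mx 1%:M 0.
  by rewrite /shear_mx mul_block_col !mulmx1 !mulmx0 !addr0.
split; last by rewrite vE mulmxA KlP mul_block_col !mulmx0 !mulmx1 !addr0 col_mx0.
apply: contra dxl0 => /eqP /matrixP /(_ (lshift _ 0) 0).
by rewrite col_mxEu !mxE eqxx mulr1n => ->.
Qed.

Lemma Kl_dichotomy dx dy dz : sys H M A B N dx dy dz -> 0 < dx l 0 ->
  (Kl H M A B l \in unitmx /\ 0 < dz l 0) \/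
  [/\ Kl H M A B l \notin unitmx, dz l 0 = 0, dy = 0 /\ subv N dz = 0,
      mup 0 (char_poly (Kl H M A B l)) = 1%N &
      (let v := col_mx (dx l 0)%:M (col_mx (subv B dx) (0 : 'cV[R]_m)) in
       v != 0 /\ Kl H M A B l *m v = 0)].
Proof.
move=> S dxl_gt0; have dxl0 : dx l 0 != 0 by rewrite gt_eqF.
have : 0 <= dz l 0 by rewrite -(pmulr_rge0 _ dxl_gt0) (sys_dxz_l_ge0 S).
rewrite le_eqVlt => /predU1P [/esym dzl0 | dzl_gt0].
  have [dy0 dz0] := sys_dz_l_eq0 S dzl0.
  right; split; [|done| |exact: mup0_char_poly_Kl S dxl0 dzl0|exact: Kl_kernel S dxl0 dzl0].
    by rewrite (Kl_unitE S dxl0) dzl0 eqxx.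
  by rewrite dz0 subv_zero.
by left; rewrite (Kl_unitE S dxl0) gt_eqF.
Qed.

End System.

Theorem proposition3 (R : realFieldType) (n m : nat)
    (H : 'M[R]_n) (M : 'M[R]_m) (A : 'M[R]_(m, n))
    (l : 'I_n) (B N : {set 'I_n}) :
  sym_psd H -> sym_psd M ->
  l \notin B -> l \notin N -> [disjoint B & N] ->
  B :|: [set l] :|: N = setT ->
  KB H M A B \in unitmx ->
  (* 1. *)
  (forall dx dy dz, sys H M A B N dx dy dz -> dx l 0 = 0 ->
     [/\ subv B dx = 0, dy = 0, dz l 0 = 0 & subv N dz = 0]) /\
  (* 2. uniqueness *)
  (forall dx dy dz dx' dy' dz',
     sys H M A B N dx dy dz -> sys H M A B N dx' dy' dz' ->
     0 < dx l 0 -> dx' l 0 = dx l 0 ->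
     [/\ subv B dx' = subv B dx, dy' = dy, dz' l 0 = dz l 0
       & subv N dz' = subv N dz]) /\
  (* 2. formulas and dichotomy *)
  (forall dx dy dz, sys H M A B N dx dy dz -> 0 < dx l 0 ->
     [/\ KB H M A B *m col_mx (subv B dx) (- dy)
           = - (dx l 0 *: col_mx (subcol B H l) (col l A)),
         dz l 0 = H l l * dx l 0 + ((subcol B H l)^T *m subv B dx) 0 0
                  - ((col l A)^T *m dy) 0 0,
         subv N dz = dx l 0 *: subcol N H l + (subm B N H)^T *m subv B dx
                     - (colsubm A N)^T *m dy &
         ((Kl H M A B l \in unitmx /\ 0 < dz l 0) \/
          [/\ Kl H M A B l \notin unitmx, dz l 0 = 0,
              dy = 0 /\ subv N dz = 0,
              mup 0 (char_poly (Kl H M A B l)) = 1%N &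
              (let v := col_mx (dx l 0)%:M (col_mx (subv B dx) (0 : 'cV[R]_m)) in
               v != 0 /\ Kl H M A B l *m v = 0)])]).
Proof.
move=> HP MP lB lN dBN cover KB_unit; have [HS MS] := (HP.1, MP.1).
split; [|split].
- move=> dx dy dz S dxl0.
  have [|-> -> ->] := sys_unique lB lN dBN cover KB_unit (sys0 H M A B N) S.
    by rewrite dxl0 mxE.
  by rewrite !subv_zero mxE.
- move=> dx dy dz dx' dy' dz' S S' _ dxl'.
  by have [-> -> ->] := sys_unique lB lN dBN cover KB_unit S S' dxl'.
- move=> dx dy dz S dxl_gt0; split.
  + exact: KB_mul_sys S.
  + exact: sys_dz_l S.
  + exact: sys_dz_N S.
  + exact: Kl_dichotomy S dxl_gt0.
Qed.
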